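(* Let $\Lambda$, $(U_\alpha)_{\alpha\in\Phi}$, $\phi,\psi$ and $C$ satisfy all hypotheses of Theorem 1 (rank $2$ root group datum with finite root groups, $\Lambda$ center-free and generated by root groups, conditions (i) and (ii)), and let $\Lambda^0$ denote the intersection of all finite-index subgroups of $\Lambda$ (which is a simple subgroup of finite index). Assume in addition that one of the following holds: (i$'$) the commutator $[U_\phi,U_\psi]$ contains some root group $U_\gamma$; (i$''$) $\phi=\psi$, and if the rank one group $X_\phi=\langle U_\phi,U_{-\phi}\rangle$ acts sharply $2$-transitively (on the set of its conjugates of $U_\phi$), then $[U_\phi,U_\phi]$ has even order. Then $\Lambda/\Lambda^0$ is abelian. Moreover $|\Lambda/\Lambda^0|\leqslant \max_{\alpha\in\Phi}|U_\alpha|$ if (i$'$) holds, and $|\Lambda/\Lambda^0|\leqslant \bigl(\max_{\alpha\in\Phi}|U_\alpha/[U_\alpha,U_\alpha]|\bigr)^2$ if (i$''$) holds.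
   Context: Root group datum: a group $\Lambda$ with subgroups $(U_\alpha)_{\alpha\in\Phi}$ indexed by real roots satisfying Tits' RGD axioms; in rank 2 the Weyl group is infinite dihedral, acting on a bi-infinite line (standard twin apartment) with chambers = edges and walls = vertices; roots are half-lines bounded by walls $\partial\alpha$, distance between walls is distance along the line. A pair of roots $\{\phi,\psi\}$ is prenilpotent iff $\phi\supseteq\psi$ or $\psi\supseteq\phi$. Condition (i): $[U_\phi,U_\psi]\neq 1$ for some prenilpotent pair $\{\phi,\psi\}$ (possibly $\phi=\psi$). Condition (ii): there is $C>0$ such that root groups of any prenilpotent pair of distinct roots with walls at distance $\geqslant C$ commute. The rank one group $X_\alpha=\langle U_\alpha,U_{-\alpha}\rangle$ acts $2$-transitively on its set of conjugates of $U_\alpha$. *)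

From Stdlib Require Import ZArith List PeanoNat.
Import ListNotations.
Set Implicit Arguments.

Record group := Group {
  carrier :> Type;
  gmul : carrier -> carrier -> carrier;
  gone : carrier;
  ginv : carrier -> carrier;
  gmulA : forall x y z, gmul x (gmul y z) = gmul (gmul x y) z;
  gmul1 : forall x, gmul gone x = x;
  gmulV : forall x, gmul (ginv x) x = gone }.

Arguments gmul {g} _ _.
Arguments gone {g}.
Arguments ginv {g} _.

Section Groups.
Variable G : group.

Definition commutator (x y : G) : G := gmul (gmul (ginv x) (ginv y)) (gmul x y).

Definition is_subgroup (H : G -> Prop) : Prop :=
  H gone /\ (forall x y, H x -> H y -> H (gmul x y)) /\ (forall x, H x -> H (ginv x)).

Inductive gen (S : G -> Prop) : G -> Prop :=
| gen_one : gen S gone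
| gen_in : forall x, S x -> gen S x
| gen_mul : forall x y, gen S x -> gen S y -> gen S (gmul x y)
| gen_inv : forall x, gen S x -> gen S (ginv x).

Definition comm_sub (A B : G -> Prop) : G -> Prop :=
  gen (fun z => exists a b, A a /\ B b /\ z = commutator a b).

Definition subset (A B : G -> Prop) : Prop := forall x, A x -> B x.
Definition same (A B : G -> Prop) : Prop := forall x, A x <-> B x.

(* g A g^-1 *)
Definition conj_set (g : G) (A : G -> Prop) : G -> Prop :=
  fun z => A (gmul (gmul (ginv g) z) g).

Definition finite_set (A : G -> Prop) : Prop :=
  exists l : list G, forall x, A x -> In x l.

Definition has_card (A : G -> Prop) (k : nat) : Prop :=
  exists l : list G, NoDup l /\ length l = k /\ forall x, A x <-> In x l.

Definition full : G -> Prop := fun _ => True.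

Definition index_le (H K : G -> Prop) (n : nat) : Prop :=
  exists l : list G, (length l <= n)%nat /\
    forall x, H x -> exists g, In g l /\ K (gmul (ginv g) x).

Definition finite_index (H : G -> Prop) : Prop := exists n, index_le full H n.

Definition Lambda0 : G -> Prop :=
  fun x => forall H, is_subgroup H -> finite_index H -> H x.

Definition center_free : Prop :=
  forall z : G, (forall x, gmul z x = gmul x z) -> z = gone.

End Groups.

Arguments commutator {G} _ _.
Arguments is_subgroup {G} _.
Arguments gen {G} _ _.
Arguments comm_sub {G} _ _ _.
Arguments subset {G} _ _.
Arguments same {G} _ _.
Arguments conj_set {G} _ _ _.
Arguments finite_set {G} _.
Arguments has_card {G} _ _.
Arguments index_le {G} _ _ _.
Arguments finite_index {G} _.

(* Twin apartment = line R with vertices (walls) Z, chambers = edges  *)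
(* [k,k+1] indexed by k : Z.  Root (n,true) = half-line [n,+oo),       *)
(* root (n,false) = half-line (-oo,n]; its wall is n.                  *)
Open Scope Z_scope.

Definition root := (Z * bool)%type.

Definition in_root (k : Z) (a : root) : Prop :=
  if snd a then fst a <= k else k + 1 <= fst a.

Definition root_sub (a b : root) : Prop := forall k, in_root k a -> in_root k b.

Definition root_opp (a : root) : root := (fst a, negb (snd a)).

Definition prenilpotent (a b : root) : Prop := root_sub a b \/ root_sub b a.

Definition wall_dist (a b : root) : Z := Z.abs (fst a - fst b).

Definition open_interval (a b c : root) : Prop :=
  (forall k, in_root k a -> in_root k b -> in_root k c) /\
  (forall k, ~ in_root k a -> ~ in_root k b -> ~ in_root k c) /\
  c <> a /\ c <> b.

(* fundamental chamber = [0,1] (k = 0) *)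
Definition positive_root (a : root) : Prop := in_root 0 a.

Definition simple_root (a : root) : Prop := positive_root a /\ (fst a = 0 \/ fst a = 1).

Definition reflect_root (v : Z) (a : root) : root := (2 * v - fst a, negb (snd a)).

Section RGD.
Variable G : group.
Variable U : root -> G -> Prop.

Definition U_union (P : root -> Prop) : G -> Prop := fun z => exists c, P c /\ U c z.

(* Tits' RGD axioms (RGD4 is implied by the generation hypothesis of the theorem) *)
Definition RGD : Prop :=
  (forall a, is_subgroup (U a)) /\
  (forall a, exists u, U a u /\ u <> gone) /\
  (forall a b, prenilpotent a b -> a <> b ->
     subset (comm_sub (U a) (U b)) (gen (U_union (open_interval a b)))) /\
  (forall a, simple_root a -> forall u, U a u -> u <> gone ->
     exists u' u'', U (root_opp a) u' /\ U (root_opp a) u'' /\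
       forall b, same (conj_set (gmul (gmul u' u) u'') (U b)) (U (reflect_root (fst a) b))) /\
  (forall a, simple_root a ->
     exists x, U (root_opp a) x /\ ~ gen (U_union positive_root) x).

Definition cond_i (phi psi : root) : Prop :=
  prenilpotent phi psi /\ exists x, comm_sub (U phi) (U psi) x /\ x <> gone.

Definition cond_ii (C : Z) : Prop :=
  0 < C /\ forall a b, prenilpotent a b -> a <> b -> C <= wall_dist a b ->
    forall x y, U a x -> U b y -> commutator x y = gone.

Definition rank_one (a : root) : G -> Prop :=
  gen (fun z => U a z \/ U (root_opp a) z).

(* X_a acts (by conjugation) sharply 2-transitively on {g U_a g^-1 : g in X_a}:
   the induced permutation group is 2-transitive and two-point stabilisers act trivially *)
Definition sharply_2_transitive (a : root) : Prop :=
  let X := rank_one a in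
  let pt g := conj_set g (U a) in
  (forall g1 h1 g2 h2, X g1 -> X h1 -> X g2 -> X h2 ->
     ~ same (pt g1) (pt h1) -> ~ same (pt g2) (pt h2) ->
     exists x, X x /\ same (conj_set x (pt g1)) (pt g2) /\
                      same (conj_set x (pt h1)) (pt h2)) /\
  (forall x g h, X x -> X g -> X h -> ~ same (pt g) (pt h) ->
     same (conj_set x (pt g)) (pt g) -> same (conj_set x (pt h)) (pt h) ->
     forall k, X k -> same (conj_set x (pt k)) (pt k)).

Definition cond_i' (phi psi : root) : Prop :=
  exists c, subset (U c) (comm_sub (U phi) (U psi)).

Definition cond_i'' (phi psi : root) : Prop :=
  phi = psi /\
  (sharply_2_transitive phi ->
     exists k, has_card (comm_sub (U phi) (U phi)) k /\ Nat.Even k).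

End RGD.
Arguments RGD {G} U.
Arguments cond_i {G} U phi psi.
Arguments cond_ii {G} U C.
Arguments cond_i' {G} U phi psi.
Arguments cond_i'' {G} U phi psi.
Arguments sharply_2_transitive {G} U a.
Arguments rank_one {G} U a _.
Arguments U_union {G} U P _.

(* Fix a subgroup H of finite index and let N be its normal core; every
   element of Λ has a positive power in N.  Everything is proved modulo N:
   - a translation t of the apartment has a power in N, so by (ii) root
     groups of parallel roots (i.e. prenilpotent pairs) commute modulo N;
     in particular [U_φ,U_ψ] ≤ N, and (i') or (i'') provide a nontrivial root
     element u ∈ N, which we move to a simple root α;
   - the RGD2 element m(u) = u'uu'' is then congruent to u'u'' ∈ U_{-α}, hence
     centralises all root groups modulo N, while it reverses the direction of
     roots; so all root elements commute modulo N and Λ/N is abelian;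
   - every root group is conjugate to U_{α0} or U_{α1} (the two simple roots),
     so Λ/N is the image of U_{α0}U_{α1}; this gives the bounds, using that
     U_{α0} or U_{α1} lies in N under (i'), and that [U_α,U_α] ≤ N.
   Finally, since the bounds are witnessed by coset representatives that do
   not depend on H, they transfer to Λ^0, the intersection of all such H. *)
From Stdlib Require Import ZArith List PeanoNat.
From Stdlib Require Import Lia Classical ClassicalEpsilon Factorial.
Import ListNotations.

Notation "x · y" := (gmul x y) (at level 40, left associativity).

Lemma gmul_assoc {G : group} (x y z : G) : x · y · z = x · (y · z).
Proof. symmetry; apply gmulA. Qed.
Lemma gmul_1_l {G : group} (x : G) : gone · x = x.
Proof. apply gmul1. Qed.
Lemma gmul_V_l {G : group} (x : G) : ginv x · x = gone.
Proof. apply gmulV. Qed.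
Lemma gmul_KV_l {G : group} (x y : G) : ginv x · (x · y) = y.
Proof. rewrite gmulA, gmulV, gmul1. reflexivity. Qed.
Lemma gmul_V_r {G : group} (x : G) : x · ginv x = gone.
Proof.
  rewrite <- (gmul1 _ (x · ginv x)), <- (gmulV _ (ginv x)) at 1.
  rewrite gmul_assoc, (gmulA _ (ginv x) x), gmulV, gmul1, gmulV. reflexivity.
Qed.
Lemma gmul_1_r {G : group} (x : G) : x · gone = x.
Proof. rewrite <- (gmulV _ x), gmulA, gmul_V_r, gmul1. reflexivity. Qed.
Lemma gmul_KV_r {G : group} (x y : G) : x · (ginv x · y) = y.
Proof. rewrite gmulA, gmul_V_r, gmul1. reflexivity. Qed.
Lemma ginv_unique {G : group} (x y : G) : x · y = gone -> ginv x = y.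
Proof. intro H. rewrite <- (gmul_1_r (ginv x)), <- H, gmul_KV_l. reflexivity. Qed.
Lemma ginv_mul {G : group} (x y : G) : ginv (x · y) = ginv y · ginv x.
Proof.
  apply ginv_unique. rewrite gmul_assoc, (gmulA _ y), gmul_V_r, gmul1, gmul_V_r.
  reflexivity.
Qed.
Lemma ginv_ginv {G : group} (x : G) : ginv (ginv x) = x.
Proof. apply ginv_unique, gmul_V_l. Qed.
Lemma ginv_one {G : group} : ginv (@gone G) = gone.
Proof. apply ginv_unique, gmul1. Qed.

Hint Rewrite @gmul_assoc @gmul_1_l @gmul_1_r @gmul_V_l @gmul_KV_l @gmul_V_r
  @gmul_KV_r @ginv_mul @ginv_ginv @ginv_one : group_rw.
Ltac group_simpl := autorewrite with group_rw.

Lemma gmul_cancel_l {G : group} (x y z : G) : x · y = x · z -> y = z.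
Proof. intro H. rewrite <- (gmul_KV_l x y), H. group_simpl. reflexivity. Qed.

Lemma mem_eq {G : group} {A : G -> Prop} {x y : G} : A x -> x = y -> A y.
Proof. intros; subst; auto. Qed.

Lemma subgroup_one {G : group} {A : G -> Prop} : is_subgroup A -> A gone.
Proof. intros [? _]; auto. Qed.
Lemma subgroup_mul {G : group} {A : G -> Prop} {x y : G} :
  is_subgroup A -> A x -> A y -> A (x · y).
Proof. intros [_ [? _]]; auto. Qed.
Lemma subgroup_inv {G : group} {A : G -> Prop} {x : G} :
  is_subgroup A -> A x -> A (ginv x).
Proof. intros [_ [_ ?]]; auto. Qed.

Lemma gen_min {G : group} (S A : G -> Prop) :
  is_subgroup A -> subset S A -> subset (gen S) A.
Proof.
  intros HA HSA x Hx. induction Hx as [|x Sx|x y _ IH1 _ IH2|x _ IH].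
  - exact (subgroup_one HA).
  - exact (HSA x Sx).
  - exact (subgroup_mul HA IH1 IH2).
  - exact (subgroup_inv HA IH).
Qed.

(* [A,A] ≤ A for a subgroup A; under (i'') it makes [U_φ,U_φ] consist of root elements. *)
Lemma comm_sub_self {G : group} (A : G -> Prop) :
  is_subgroup A -> subset (comm_sub A A) A.
Proof.
  intros HA. apply gen_min; auto. intros z [p [q [Hp [Hq ->]]]].
  unfold commutator. repeat apply subgroup_mul; auto; apply subgroup_inv; auto.
Qed.

(* Congruence and commutation modulo a normal subgroup N, i.e. in Λ/N. *)
Definition normal {G : group} (N : G -> Prop) : Prop :=
  is_subgroup N /\ forall g x, N x -> N (g · (x · ginv g)).
Definition congr_mod {G : group} (N : G -> Prop) (x y : G) : Prop := N (ginv x · y).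
Definition commute_mod {G : group} (N : G -> Prop) (x y : G) : Prop :=
  congr_mod N (x · y) (y · x).

Section Congruence.
Variable G : group.
Variable N : G -> Prop.
Hypothesis HN : normal N.

Let HS : is_subgroup N := proj1 HN.

Lemma normal_conj (g x : G) : N x -> N (ginv g · (x · g)).
Proof. intros Hx. apply (mem_eq (proj2 HN (ginv g) x Hx)). group_simpl. reflexivity. Qed.

Lemma congr_refl (x : G) : congr_mod N x x.
Proof. unfold congr_mod. group_simpl. exact (subgroup_one HS). Qed.
Lemma congr_of_eq (x y : G) : x = y -> congr_mod N x y.
Proof. intros ->; apply congr_refl. Qed.
Lemma congr_sym (x y : G) : congr_mod N x y -> congr_mod N y x.
Proof. intros H. apply (mem_eq (subgroup_inv HS H)). group_simpl. reflexivity. Qed.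
Lemma congr_trans (x y z : G) : congr_mod N x y -> congr_mod N y z -> congr_mod N x z.
Proof. intros H1 H2. apply (mem_eq (subgroup_mul HS H1 H2)). group_simpl. reflexivity. Qed.
Lemma congr_mul (x x' y y' : G) :
  congr_mod N x x' -> congr_mod N y y' -> congr_mod N (x · y) (x' · y').
Proof.
  intros H1 H2. apply (mem_eq (subgroup_mul HS (normal_conj y _ H1) H2)).
  group_simpl. reflexivity.
Qed.
Lemma congr_inv (x x' : G) : congr_mod N x x' -> congr_mod N (ginv x) (ginv x').
Proof.
  intros H. apply (mem_eq (subgroup_inv HS (normal_conj (ginv x') _ H))).
  group_simpl. reflexivity.
Qed.
Lemma congr_one_iff (x : G) : congr_mod N x gone <-> N x.
Proof.
  unfold congr_mod. group_simpl. split; intros H.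
  - apply (mem_eq (subgroup_inv HS H)). group_simpl. reflexivity.
  - exact (subgroup_inv HS H).
Qed.

Lemma commutator_in_of_commute_mod (x y : G) : commute_mod N y x -> N (commutator x y).
Proof.
  unfold commute_mod, congr_mod, commutator. intros H.
  apply (mem_eq H). group_simpl. reflexivity.
Qed.
Lemma commute_mod_of_commutator (x y : G) : commutator x y = gone -> commute_mod N x y.
Proof.
  unfold commutator. intros H. apply congr_of_eq, (gmul_cancel_l (ginv x · ginv y)).
  rewrite H. group_simpl. reflexivity.
Qed.
Lemma commute_mod_sym (x y : G) : commute_mod N x y -> commute_mod N y x.
Proof. apply congr_sym. Qed.
Lemma commute_mod_congr_r (x y y' : G) :
  congr_mod N y y' -> commute_mod N x y' -> commute_mod N x y.
Proof.
  intros E H. apply (congr_trans _ (x · y')); [apply congr_mul; auto using congr_refl|].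
  apply (congr_trans _ (y' · x)); [exact H|].
  apply congr_mul; auto using congr_sym, congr_refl.
Qed.
Lemma commute_mod_congr_l (x x' y : G) :
  congr_mod N x x' -> commute_mod N x' y -> commute_mod N x y.
Proof.
  intros E H. apply commute_mod_sym, (commute_mod_congr_r _ _ x'); auto using commute_mod_sym.
Qed.

Lemma commute_mod_subgroup (x : G) : is_subgroup (commute_mod N x).
Proof.
  unfold commute_mod. split; [|split].
  - apply congr_of_eq. group_simpl. reflexivity.
  - intros y z H1 H2.
    apply (congr_trans _ (x · y · z)); [apply congr_of_eq; group_simpl; reflexivity|].
    apply (congr_trans _ (y · x · z)); [apply congr_mul; auto using congr_refl|].
    apply (congr_trans _ (y · (z · x))).
    + rewrite gmul_assoc. apply congr_mul; auto using congr_refl.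
    + apply congr_of_eq. group_simpl. reflexivity.
  - intros y H. apply congr_sym.
    apply (congr_trans _ (ginv y · (x · y · ginv y))).
    { apply congr_of_eq. group_simpl. reflexivity. }
    apply (congr_trans _ (ginv y · (y · x · ginv y))).
    { apply congr_mul; [apply congr_refl| apply congr_mul; auto using congr_refl]. }
    apply congr_of_eq. group_simpl. reflexivity.
Qed.

Lemma conj_congr_of_commute_mod (g w : G) :
  commute_mod N g w -> congr_mod N w (g · (w · ginv g)).
Proof.
  intros H. apply congr_sym.
  apply (congr_trans _ (g · w · ginv g)); [apply congr_of_eq; group_simpl; reflexivity|].
  apply (congr_trans _ (w · g · ginv g)); [apply congr_mul; auto using congr_refl|].
  apply congr_of_eq. group_simpl. reflexivity.
Qed.

Lemma conj_congr_of_mem (p w : G) : N p -> congr_mod N w (p · (w · ginv p)).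
Proof.
  intros Hp. apply (mem_eq (subgroup_mul HS (normal_conj w _ Hp) (subgroup_inv HS Hp))).
  group_simpl. reflexivity.
Qed.

End Congruence.

Fixpoint gpow {G : group} (x : G) (n : nat) : G :=
  match n with O => gone | S n => x · gpow x n end.

Lemma gpow_add {G : group} (x : G) a b : gpow x (a + b) = gpow x a · gpow x b.
Proof. induction a as [|a IH]; simpl; group_simpl; [reflexivity|rewrite IH; reflexivity]. Qed.
Lemma gpow_mul {G : group} (x : G) a b : gpow x (a * b) = gpow (gpow x a) b.
Proof.
  rewrite Nat.mul_comm. induction b as [|b IH]; simpl; [reflexivity|].
  rewrite gpow_add, IH. reflexivity.
Qed.
Lemma gpow_conj {G : group} (g x : G) q :
  ginv g · (gpow x q · g) = gpow (ginv g · (x · g)) q.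
Proof.
  induction q as [|q IH]; simpl; group_simpl; [reflexivity|].
  rewrite <- IH. group_simpl. reflexivity.
Qed.
Lemma subgroup_pow {G : group} (A : G -> Prop) x q : is_subgroup A -> A x -> A (gpow x q).
Proof.
  intros HA Hx. induction q as [|q IH]; simpl;
    [exact (subgroup_one HA)|exact (subgroup_mul HA Hx IH)].
Qed.

Definition periodic_mod {G : group} (N : G -> Prop) : Prop :=
  forall x : G, exists k, (1 <= k)%nat /\ N (gpow x k).

Definition core {G : group} (H : G -> Prop) : G -> Prop :=
  fun x => forall g, H (ginv g · (x · g)).

Lemma core_normal {G : group} (H : G -> Prop) : is_subgroup H -> normal (core H).
Proof.
  intros HH. unfold core. split; [split; [|split]|].
  - intro g. group_simpl. exact (subgroup_one HH).
  - intros x y Hx Hy g. apply (mem_eq (subgroup_mul HH (Hx g) (Hy g))). group_simpl. reflexivity.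
  - intros x Hx g. apply (mem_eq (subgroup_inv HH (Hx g))). group_simpl. reflexivity.
  - intros h x Hx g. apply (mem_eq (Hx (ginv h · g))). group_simpl. reflexivity.
Qed.
Lemma core_sub {G : group} (H : G -> Prop) x : core H x -> H x.
Proof. intro Hx. apply (mem_eq (Hx gone)). group_simpl. reflexivity. Qed.

Lemma divide_fact a n : (1 <= a <= n)%nat -> Nat.divide a (fact n).
Proof.
  induction n as [|n IH]; intros Ha; [lia|]. simpl fact.
  destruct (Nat.eq_dec a (S n)) as [->|Hne].
  - exists (fact n). lia.
  - destruct (IH ltac:(lia)) as [q Hq]. exists (q + n * q)%nat. rewrite Hq. lia.
Qed.

(* Pigeonhole: if n left cosets of H cover G, then among x^0 g, ..., x^n g two
   lie in the same coset, so some x^a with 1 <= a <= n lies in g H g^-1. *)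
Lemma power_in_conjugate {G : group} (H : G -> Prop) n :
  is_subgroup H -> index_le (full G) H n ->
  forall g x : G, exists a, (1 <= a <= n)%nat /\ H (ginv g · (gpow x a · g)).
Proof.
  intros HH [l [Hlen Hcov]] g x.
  set (rep := fun j => epsilon (inhabits (@gone G))
                (fun r => In r l /\ H (ginv r · (gpow x j · g)))).
  assert (Hrep : forall j, In (rep j) l /\ H (ginv (rep j) · (gpow x j · g))).
  { intro j. apply epsilon_spec. apply (Hcov (gpow x j · g) I). }
  destruct (classic (exists i j, (i < j <= n)%nat /\ rep i = rep j))
    as [[i [j [Hij E]]]|Hinj].
  - exists (j - i)%nat. split; [lia|].
    destruct (Hrep i) as [_ Hi], (Hrep j) as [_ Hj]. rewrite <- E in Hj.
    pose proof (subgroup_mul HH (subgroup_inv HH Hi) Hj) as K.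
    replace j with (i + (j - i))%nat in K by lia. rewrite gpow_add in K.
    apply (mem_eq K). group_simpl. reflexivity.
  - exfalso.
    assert (ND : NoDup (map rep (seq 0 (S n)))).
    { apply NoDup_map_NoDup_ForallPairs; [|apply seq_NoDup].
      intros a b Ha Hb E. apply in_seq in Ha, Hb.
      destruct (Nat.lt_trichotomy a b) as [h|[h|h]]; auto;
        exfalso; apply Hinj; [exists a, b|exists b, a]; split; auto; lia. }
    assert (Incl : incl (map rep (seq 0 (S n))) l).
    { intros y Hy. apply in_map_iff in Hy. destruct Hy as [j [<- _]]. apply Hrep. }
    pose proof (NoDup_incl_length ND Incl) as L.
    rewrite length_map, length_seq in L. lia.
Qed.

(* The core of a subgroup of index at most n contains x^(n!) for every x. *)
Lemma core_periodic {G : group} (H : G -> Prop) :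
  is_subgroup H -> finite_index H -> periodic_mod (core H).
Proof.
  intros HH [n Hn] x. exists (fact n). split; [pose proof (lt_O_fact n); lia|].
  intro g. destruct (power_in_conjugate _ _ HH Hn g x) as [a [Ha Hg]].
  destruct (divide_fact _ _ Ha) as [q ->].
  rewrite Nat.mul_comm, gpow_mul, gpow_conj. apply subgroup_pow; auto.
Qed.

Lemma index_le_intersection {G : group} (H1 H2 : G -> Prop) n1 n2 :
  is_subgroup H1 -> is_subgroup H2 -> index_le (full G) H1 n1 -> index_le (full G) H2 n2 ->
  index_le (full G) (fun x => H1 x /\ H2 x) (n1 * n2).
Proof.
  intros S1 S2 [l1 [L1 C1]] [l2 [L2 C2]].
  set (meet := fun p : G * G => epsilon (inhabits (@gone G))
                 (fun z => H1 (ginv (fst p) · z) /\ H2 (ginv (snd p) · z))).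
  exists (map meet (list_prod l1 l2)). split.
  - rewrite length_map, length_prod. apply Nat.mul_le_mono; auto.
  - intros x _. destruct (C1 x I) as [a [Ia Ha]], (C2 x I) as [b [Ib Hb]].
    exists (meet (a, b)). split; [apply in_map, in_prod; auto|].
    assert (E : H1 (ginv a · meet (a, b)) /\ H2 (ginv b · meet (a, b))).
    { apply (epsilon_spec _ (fun z => H1 (ginv a · z) /\ H2 (ginv b · z))). exists x. auto. }
    destruct E as [E1 E2]. split.
    + apply (mem_eq (subgroup_mul S1 (subgroup_inv S1 E1) Ha)). group_simpl. reflexivity.
    + apply (mem_eq (subgroup_mul S2 (subgroup_inv S2 E2) Hb)). group_simpl. reflexivity.
Qed.

Lemma separating_subgroup {G : group} (x : G) (R : list G) :
  (forall r, In r R -> exists H, is_subgroup H /\ finite_index H /\ ~ H (ginv r · x)) ->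
  exists H, is_subgroup H /\ finite_index H /\ forall r, In r R -> ~ H (ginv r · x).
Proof.
  induction R as [|r0 R IH]; intros Hsep.
  - exists (full G). split; [repeat split|split; [|intros r []]].
    exists 1%nat, [gone]. split; [simpl; lia|]. intros y _. exists gone.
    split; [left; reflexivity|exact I].
  - destruct IH as [H [SH [[n1 FH] NH]]]; [intros r Hr; apply Hsep; right; auto|].
    destruct (Hsep r0 (or_introl eq_refl)) as [K [SK [[n2 FK] NK]]].
    exists (fun y => H y /\ K y). split; [|split].
    + split; [split; apply subgroup_one; auto|split].
      * intros y z [] []. split; apply subgroup_mul; auto.
      * intros y []. split; apply subgroup_inv; auto.
    + exists (n1 * n2)%nat. apply index_le_intersection; auto.
    + intros r [<-|Hr] [A B]; [apply NK; auto|apply (NH r Hr); auto].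
Qed.

Lemma Lambda0_index_le {G : group} (R : list G) (M : nat) : (length R <= M)%nat ->
  (forall H, is_subgroup H -> finite_index H -> forall x, exists r, In r R /\ H (ginv r · x)) ->
  index_le (full G) (Lambda0 G) M.
Proof.
  intros L Hcov. exists R. split; auto. intros x _. apply NNPP. intro Hn.
  destruct (separating_subgroup x R) as [H [SH [FH NH]]].
  - intros r Hr. apply NNPP. intro Hc. apply Hn. exists r. split; auto.
    intros K SK FK. apply NNPP. intro Hk. apply Hc. exists K. auto.
  - destruct (Hcov H SH FH x) as [r [Hr Hh]]. exact (NH r Hr Hh).
Qed.

Lemma prenilpotent_iff_parallel (a b : root) : prenilpotent a b <-> snd a = snd b.
Proof.
  destruct a as [n e], b as [m f]. unfold prenilpotent, root_sub, in_root; simpl.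
  split.
  - destruct e, f; auto; intros [H|H].
    + specialize (H (Z.max n m)). lia.
    + specialize (H (Z.min n m - 1)). lia.
    + specialize (H (Z.min n m - 1)). lia.
    + specialize (H (Z.max n m)). lia.
  - intros <-. destruct e, (Z.le_gt_cases n m);
      [right|left|left|right]; intros; lia.
Qed.

Definition alpha0 : root := (0, true).
Definition alpha1 : root := (1, false).
Lemma alpha0_simple : simple_root alpha0.
Proof. unfold simple_root, positive_root, in_root, alpha0; simpl. split; lia. Qed.
Lemma alpha1_simple : simple_root alpha1.
Proof. unfold simple_root, positive_root, in_root, alpha1; simpl. split; lia. Qed.

(* The simple root to which a root with wall n is conjugate. *)
Definition simple_of_wall (n : Z) : root := if Z.even n then alpha0 else alpha1.
Lemma simple_of_wall_simple n : simple_root (simple_of_wall n).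
Proof. unfold simple_of_wall. destruct (Z.even n); auto using alpha0_simple, alpha1_simple. Qed.

Lemma reflect_opp (a : root) : reflect_root (fst a) (root_opp a) = a.
Proof.
  destruct a as [n s]. unfold reflect_root, root_opp; cbn [fst snd].
  f_equal; [lia|destruct s; reflexivity].
Qed.

Definition conj_roots {G : group} (U : root -> G -> Prop) (b c : root) : Prop :=
  exists g : G, forall y,
    (U b y -> U c (g · (y · ginv g))) /\ (U c y -> U b (ginv g · (y · g))).

Section RootGroups.
Variable G : group.
Variable U : root -> G -> Prop.
Hypothesis HR : RGD U.

Lemma conj_roots_refl b : conj_roots U b b.
Proof. exists gone. intro y. group_simpl. tauto. Qed.
Lemma conj_roots_sym b c : conj_roots U b c -> conj_roots U c b.
Proof. intros [g Hg]. exists (ginv g). intro y. group_simpl. split; apply Hg. Qed.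
Lemma conj_roots_trans b c d : conj_roots U b c -> conj_roots U c d -> conj_roots U b d.
Proof.
  intros [g Hg] [h Hh]. exists (h · g). intro y. split; intro Hy.
  - apply (mem_eq (proj1 (Hh _) (proj1 (Hg _) Hy))). group_simpl. reflexivity.
  - apply (mem_eq (proj2 (Hg _) (proj2 (Hh _) Hy))). group_simpl. reflexivity.
Qed.

Lemma rgd_reflection a u : simple_root a -> U a u -> u <> gone ->
  exists u' u'', U (root_opp a) u' /\ U (root_opp a) u'' /\
    let m := u' · u · u'' in
    forall b y, (U b y -> U (reflect_root (fst a) b) (m · (y · ginv m))) /\
      (U (reflect_root (fst a) b) y -> U b (ginv m · (y · m))).
Proof.
  destruct HR as [_ [_ [_ [H2 _]]]]. intros Hs Hu Hne.
  destruct (H2 a Hs u Hu Hne) as [u' [u'' [A [B C]]]].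
  exists u', u''. split; auto. split; auto. intros m b y. unfold m. split; intro Hy.
  - apply (C b). unfold conj_set. apply (mem_eq Hy). group_simpl. reflexivity.
  - apply (C b) in Hy. unfold conj_set in Hy. apply (mem_eq Hy). group_simpl. reflexivity.
Qed.

Lemma reflection_elt a : simple_root a ->
  exists m : G, forall b y, (U b y -> U (reflect_root (fst a) b) (m · (y · ginv m))) /\
    (U (reflect_root (fst a) b) y -> U b (ginv m · (y · m))).
Proof.
  intros Hs. destruct (proj1 (proj2 HR) a) as [u [Hu Hne]].
  destruct (rgd_reflection a u Hs Hu Hne) as [u' [u'' [_ [_ C]]]]. eexists. exact C.
Qed.

Lemma conj_roots_reflect a b : simple_root a -> conj_roots U b (reflect_root (fst a) b).
Proof. intros Hs. destruct (reflection_elt a Hs) as [m Hm]. exists m. intro y. apply Hm. Qed.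

(* Composing the reflections in the walls 0 and 1 translates by 2. *)
Lemma conj_roots_shift n e : conj_roots U (n, e) (n + 2, e).
Proof.
  eapply conj_roots_trans; [apply (conj_roots_reflect alpha0), alpha0_simple|].
  eapply conj_roots_trans; [apply (conj_roots_reflect alpha1), alpha1_simple|].
  unfold reflect_root, alpha0, alpha1; cbn [fst snd].
  rewrite Bool.negb_involutive.
  replace (2 * 1 - (2 * 0 - n)) with (n + 2) by lia. apply conj_roots_refl.
Qed.

Lemma conj_roots_translate e q : forall n, conj_roots U (n, e) (n + 2 * q, e).
Proof.
  induction q as [|q IH|q IH] using Z.peano_ind; intro n.
  - rewrite Z.add_0_r. apply conj_roots_refl.
  - replace (n + 2 * Z.succ q) with (n + 2 * q + 2) by lia.
    eapply conj_roots_trans; [apply IH|apply conj_roots_shift].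
  - eapply conj_roots_trans; [apply IH|]. apply conj_roots_sym.
    replace (n + 2 * q) with (n + 2 * Z.pred q + 2) by lia. apply conj_roots_shift.
Qed.

Lemma conj_roots_simple b : conj_roots U b (simple_of_wall (fst b)).
Proof.
  destruct b as [n e]. cbn [fst].
  eapply conj_roots_trans; [apply (conj_roots_translate e (- (n / 2)))|].
  replace (n + 2 * - (n / 2)) with (n mod 2) by (pose proof (Z.div_mod n 2); lia).
  rewrite Zmod_even. unfold simple_of_wall, alpha0, alpha1.
  destruct (Z.even n), e; try apply conj_roots_refl.
  - apply (conj_roots_reflect alpha0 (0, false) alpha0_simple).
  - apply (conj_roots_reflect alpha1 (1, true) alpha1_simple).
Qed.

Lemma translation_elt : exists t : G, forall j n e y,
  U (n, e) y -> U (n + 2 * Z.of_nat j, e) (gpow t j · (y · ginv (gpow t j))).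
Proof.
  destruct (reflection_elt alpha0 alpha0_simple) as [m0 H0].
  destruct (reflection_elt alpha1 alpha1_simple) as [m1 H1].
  exists (m1 · m0).
  assert (Step : forall n e y, U (n, e) y -> U (n + 2, e) ((m1 · m0) · (y · ginv (m1 · m0)))).
  { intros n e y Hy. apply (proj1 (H0 _ _)), (proj1 (H1 _ _)) in Hy.
    unfold reflect_root, alpha0, alpha1 in Hy; cbn [fst snd] in Hy.
    rewrite Bool.negb_involutive in Hy.
    replace (2 * 1 - (2 * 0 - n)) with (n + 2) in Hy by lia.
    apply (mem_eq Hy). group_simpl. reflexivity. }
  induction j as [|j IH]; intros n e y Hy; simpl gpow.
  - rewrite Z.add_0_r. apply (mem_eq Hy). group_simpl. reflexivity.
  - replace (n + 2 * Z.of_nat (S j)) with (n + 2 * Z.of_nat j + 2) by lia.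
    apply (mem_eq (Step _ _ _ (IH n e y Hy))). group_simpl. reflexivity.
Qed.

End RootGroups.

Section ModuloPeriodic.
Variable G : group.
Variable U : root -> G -> Prop.
Variable N : G -> Prop.
Variable C : Z.
Hypothesis HR : RGD U.
Hypothesis HN : normal N.
Hypothesis Hper : periodic_mod N.
Hypothesis Hii : cond_ii U C.

Let HS : is_subgroup N := proj1 HN.

(* Root groups of parallel roots commute modulo N: a power of the translation
   lies in N and moves U_c so far from U_b that (ii) applies. *)
Lemma parallel_commute_mod b c y z :
  snd b = snd c -> U b y -> U c z -> commute_mod N y z.
Proof.
  destruct Hii as [HC Hfar], b as [nb e], c as [nc f]. cbn [snd]. intros <- Hy Hz.
  destruct (translation_elt G U HR) as [t Ht]. destruct (Hper t) as [k [Hk Nk]].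
  set (J := Z.to_nat (C + Z.abs (nb - nc))).
  set (p := gpow t (k * J)).
  assert (Np : N p) by (unfold p; rewrite gpow_mul; apply subgroup_pow; auto).
  apply (commute_mod_congr_r G N HN _ _ _ (conj_congr_of_mem G N HN _ z Np)).
  apply commute_mod_of_commutator; auto.
  assert (Far : C <= Z.abs (nb - (nc + 2 * Z.of_nat (k * J)))).
  { assert (J <= k * J)%nat by (pose proof (Nat.mul_le_mono_r 1 k J Hk); lia).
    assert (Z.of_nat J = C + Z.abs (nb - nc)) by (unfold J; rewrite Z2Nat.id; lia).
    lia. }
  apply (Hfar (nb, e) (nc + 2 * Z.of_nat (k * J), e)); auto.
  - apply prenilpotent_iff_parallel. reflexivity.
  - intro E. apply (f_equal fst) in E. cbn [fst] in E.
    rewrite E, Z.sub_diag in Far. simpl in Far. lia.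
Qed.

Lemma parallel_comm_sub_in b c : snd b = snd c -> subset (comm_sub (U b) (U c)) N.
Proof.
  intros Hbc. apply gen_min; auto. intros z [p [q [Hp [Hq ->]]]].
  apply commutator_in_of_commute_mod; auto. apply (parallel_commute_mod c b); auto.
Qed.

(* If N contains u ∈ U_a \ 1 with a simple, then m(u) = u'uu'' realises the
   reflection s_a and is congruent to u'u'' ∈ U_{-a}; the latter commutes
   modulo N with the root groups parallel to -a, and also with those parallel
   to a, since m(u) conjugates it into U_a. *)
Lemma reflection_mod a u : simple_root a -> U a u -> N u -> u <> gone ->
  exists m : G, (forall b y, U b y -> U (reflect_root (fst a) b) (m · (y · ginv m))) /\
    (forall b w, U b w -> commute_mod N m w).
Proof.
  intros Hs Hu Nu Hne.
  destruct (rgd_reflection G U HR a u Hs Hu Hne) as [u' [u'' [A [B Hrefl]]]].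
  cbv zeta in Hrefl. set (m := u' · u · u'') in Hrefl.
  exists m. split; [intros b y Hy; apply (Hrefl b y); auto|].
  destruct HR as [Hsg _].
  set (v := u' · u'').
  assert (Hv : U (root_opp a) v) by apply (subgroup_mul (Hsg _) A B).
  assert (Emv : congr_mod N m v).
  { unfold congr_mod, m, v. apply (mem_eq (normal_conj G N HN u'' _ (subgroup_inv HS Nu))).
    group_simpl. reflexivity. }
  assert (Ev : congr_mod N v (m · (v · ginv m))).
  { apply conj_congr_of_commute_mod, (commute_mod_congr_l G N HN _ _ _ Emv); auto.
    apply (parallel_commute_mod (root_opp a) (root_opp a)); auto. }
  assert (Hv' : U a (m · (v · ginv m))).
  { rewrite <- (reflect_opp a) at 1. apply (Hrefl _ _). exact Hv. }
  intros b w Hw. apply (commute_mod_congr_l G N HN _ _ _ Emv).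
  destruct (Bool.bool_dec (snd b) (snd (root_opp a))) as [D|D].
  - apply (parallel_commute_mod (root_opp a) b); auto.
  - apply (commute_mod_congr_l G N HN _ _ _ Ev), (parallel_commute_mod a b); auto.
    destruct a as [na []], b as [nb []]; cbn in *; congruence.
Qed.

Lemma root_elts_commute_mod : (exists c u, U c u /\ N u /\ u <> gone) ->
  forall b d y z, U b y -> U d z -> commute_mod N y z.
Proof.
  intros [c [u [Hu [Nu Hne]]]].
  destruct (conj_roots_simple G U HR c) as [g Hg].
  set (a := simple_of_wall (fst c)) in *.
  set (u' := g · (u · ginv g)).
  assert (Nu' : N u')
    by (apply (mem_eq (normal_conj G N HN (ginv g) _ Nu)); unfold u'; group_simpl; reflexivity).
  assert (Hne' : u' <> gone).
  { intro E. apply Hne. transitivity (ginv g · u' · g).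
    - unfold u'. group_simpl. reflexivity.
    - rewrite E. group_simpl. reflexivity. }
  destruct (reflection_mod a u' (simple_of_wall_simple _) (proj1 (Hg u) Hu) Nu' Hne')
    as [m [Hm1 Hm2]].
  intros b d y z Hy Hz.
  destruct (Bool.bool_dec (snd b) (snd d)) as [D|D]; [apply (parallel_commute_mod b d); auto|].
  apply (commute_mod_congr_r G N HN _ _ _ (conj_congr_of_commute_mod G N HN _ _ (Hm2 d z Hz))).
  apply (parallel_commute_mod b (reflect_root (fst a) d)); auto.
  unfold reflect_root; cbn [snd]. destruct (snd b), (snd d); cbn; congruence.
Qed.

Hypothesis Hgen : forall x : G, gen (fun z => exists a, U a z) x.

Lemma abelian_of_root_elt : (exists c u, U c u /\ N u /\ u <> gone) ->
  forall x y : G, commute_mod N x y.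
Proof.
  intros Hu x y. set (Roots := fun z => exists a, U a z).
  assert (Hroot : forall z, (exists a, U a z) -> forall w, commute_mod N z w).
  { intros z [b Hz] w. apply (gen_min Roots _ (commute_mod_subgroup G N HN z)); [|apply Hgen].
    intros w' [d Hw']. apply (root_elts_commute_mod Hu b d); auto. }
  apply (commute_mod_sym G N HN).
  apply (gen_min Roots _ (commute_mod_subgroup G N HN y)); [|apply Hgen].
  intros z Hz. apply (commute_mod_sym G N HN), Hroot; auto.
Qed.

Lemma abelian_of_conditions phi psi : cond_i U phi psi ->
  (cond_i' U phi psi \/ cond_i'' U phi psi) -> forall x y : G, commute_mod N x y.
Proof.
  intros [Hpre [x [Hx Hxne]]] Hcase. apply abelian_of_root_elt.
  assert (Hcomm : subset (comm_sub (U phi) (U psi)) N)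
    by (apply parallel_comm_sub_in, prenilpotent_iff_parallel; auto).
  destruct Hcase as [[c Hc]|[<- _]].
  - destruct (proj1 (proj2 HR) c) as [u [Hu Hne]]. exists c, u. auto.
  - exists phi, x. split; auto. apply (comm_sub_self _ (proj1 HR phi)); auto.
Qed.

End ModuloPeriodic.

Section ModuloAbelian.
Variable G : group.
Variable U : root -> G -> Prop.
Variable N : G -> Prop.
Hypothesis HR : RGD U.
Hypothesis HN : normal N.
Hypothesis Hab : forall x y : G, commute_mod N x y.
Hypothesis Hgen : forall x : G, gen (fun z => exists a, U a z) x.

(* Conjugation is trivial in the abelian group Λ/N, so modulo N every root
   element lies in U_{α0} or U_{α1}. *)
Lemma root_elt_congr_simple b w : U b w ->
  exists w', U (simple_of_wall (fst b)) w' /\ congr_mod N w w'.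
Proof.
  intros Hw. destruct (conj_roots_simple G U HR b) as [g Hg].
  exists (g · (w · ginv g)). split; [apply Hg; auto|].
  apply conj_congr_of_commute_mod; auto.
Qed.

Lemma simple_product_subgroup :
  is_subgroup (fun x => exists u0 u1, U alpha0 u0 /\ U alpha1 u1 /\ congr_mod N x (u0 · u1)).
Proof.
  destruct HR as [Hsg _]. split; [|split].
  - exists gone, gone.
    split; [exact (subgroup_one (Hsg _))|split; [exact (subgroup_one (Hsg _))|]].
    apply congr_of_eq; auto. group_simpl. reflexivity.
  - intros x y [u0 [u1 [H0 [H1 Ex]]]] [v0 [v1 [K0 [K1 Ey]]]].
    exists (u0 · v0), (u1 · v1).
    split; [exact (subgroup_mul (Hsg _) H0 K0)|split; [exact (subgroup_mul (Hsg _) H1 K1)|]].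
    apply (congr_trans G N HN _ _ _ (congr_mul G N HN _ _ _ _ Ex Ey)).
    apply (congr_trans G N HN _ (u0 · (u1 · v0) · v1)).
    { apply congr_of_eq; auto. group_simpl. reflexivity. }
    apply (congr_trans G N HN _ (u0 · (v0 · u1) · v1)).
    2: { apply congr_of_eq; auto. group_simpl. reflexivity. }
    apply congr_mul; auto using congr_refl. apply congr_mul; auto using congr_refl.
    apply Hab.
  - intros x [u0 [u1 [H0 [H1 Ex]]]].
    exists (ginv u0), (ginv u1).
    split; [exact (subgroup_inv (Hsg _) H0)|split; [exact (subgroup_inv (Hsg _) H1)|]].
    apply (congr_trans G N HN _ _ _ (congr_inv G N HN _ _ Ex)). group_simpl. apply Hab.
Qed.

Lemma congr_simple_product x :
  exists u0 u1, U alpha0 u0 /\ U alpha1 u1 /\ congr_mod N x (u0 · u1).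
Proof.
  destruct HR as [Hsg _].
  apply (gen_min (fun z => exists a, U a z) _ simple_product_subgroup); [|apply Hgen].
  intros w [b Hw]. destruct (root_elt_congr_simple b w Hw) as [w' [Hw' E]].
  unfold simple_of_wall in Hw'. destruct (Z.even (fst b)).
  - exists w', gone. split; [exact Hw'|split; [exact (subgroup_one (Hsg _))|]].
    group_simpl. exact E.
  - exists gone, w'. split; [exact (subgroup_one (Hsg _))|split; [exact Hw'|]].
    group_simpl. exact E.
Qed.

(* If N contains some U_γ, it contains the simple root group conjugate to it,
   so Λ/N is the image of the other simple root group alone. *)
Lemma congr_other_simple c : subset (U c) N ->
  forall x, exists u, U (simple_of_wall (fst c + 1)) u /\ congr_mod N x u.
Proof.
  intros Hc x.
  assert (Hsimple : subset (U (simple_of_wall (fst c))) N).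
  { destruct (conj_roots_simple G U HR c) as [g Hg]. intros y Hy.
    apply (mem_eq (proj2 HN g _ (Hc _ (proj2 (Hg y) Hy)))). group_simpl. reflexivity. }
  destruct (congr_simple_product x) as [u0 [u1 [H0 [H1 E]]]].
  unfold simple_of_wall in *. rewrite Z.even_add.
  destruct (Z.even (fst c)); cbn [Z.even Bool.eqb].
  - exists u1. split; auto. apply (congr_trans G N HN _ _ _ E).
    apply (congr_trans G N HN _ (gone · u1)); [|apply congr_of_eq; auto; group_simpl; reflexivity].
    apply congr_mul; auto using congr_refl. apply congr_one_iff; auto.
  - exists u0. split; auto. apply (congr_trans G N HN _ _ _ E).
    apply (congr_trans G N HN _ (u0 · gone)); [|apply congr_of_eq; auto; group_simpl; reflexivity].
    apply congr_mul; auto using congr_refl. apply congr_one_iff; auto.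
Qed.

End ModuloAbelian.

Lemma finite_enum {G : group} (A : G -> Prop) :
  finite_set A -> exists l, has_card A (length l) /\ forall x, A x <-> In x l.
Proof.
  intros [l Hl].
  set (l' := nodup (fun x y : G => excluded_middle_informative (x = y))
               (filter (fun z => if excluded_middle_informative (A z) then true else false) l)).
  assert (Hl' : forall x, A x <-> In x l').
  { intro x. unfold l'. rewrite nodup_In, filter_In.
    destruct (excluded_middle_informative (A x)); split; intuition; discriminate. }
  exists l'. split; auto. exists l'. split; [apply NoDup_nodup|auto].
Qed.

Section FiniteIndexQuotients.
Variable G : group.
Variable U : root -> G -> Prop.
Variable C : Z.
Hypothesis HR : RGD U.
Hypothesis Hii : cond_ii U C.
Hypothesis Hgen : forall x : G, gen (fun z => exists a, U a z) x.
Variables phi psi : root.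
Hypothesis Hi : cond_i U phi psi.
Hypothesis Hcase : cond_i' U phi psi \/ cond_i'' U phi psi.

Lemma core_quotient_abelian H : is_subgroup H -> finite_index H ->
  forall x y : G, commute_mod (core H) x y.
Proof.
  intros SH FH.
  exact (abelian_of_conditions G U (core H) C HR (core_normal _ SH) (core_periodic _ SH FH)
           Hii Hgen phi psi Hi Hcase).
Qed.

(* Under (i'), the cosets of Λ^0 are represented by one simple root group. *)
Lemma index_bound_i' (M : nat) : cond_i' U phi psi ->
  (forall a, finite_set (U a)) -> (forall a k, has_card (U a) k -> (k <= M)%nat) ->
  index_le (full G) (Lambda0 G) M.
Proof.
  intros [c Hc] Hfin HM.
  destruct (finite_enum _ (Hfin (simple_of_wall (fst c + 1)))) as [R [HcardR HR']].
  apply (Lambda0_index_le R); [exact (HM _ _ HcardR)|].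
  intros H SH FH x.
  assert (HcN : subset (U c) (core H)).
  { intros y Hy. apply (parallel_comm_sub_in G U (core H) C HR (core_normal _ SH)
                          (core_periodic _ SH FH) Hii phi psi); auto.
    apply prenilpotent_iff_parallel, (proj1 Hi). }
  destruct (congr_other_simple G U (core H) HR (core_normal _ SH)
              (core_quotient_abelian H SH FH) Hgen c HcN x) as [u [Hu E]].
  exists u. split; [apply HR'; auto|].
  apply core_sub, (congr_sym G _ (core_normal _ SH)); auto.
Qed.

(* The cosets of Λ^0 are represented by products of coset representatives
   of [U_α,U_α] in U_α, for the two simple roots α (the bound used under (i'')). *)
Lemma index_bound_i'' (M : nat) :
  (forall a, index_le (U a) (comm_sub (U a) (U a)) M) ->
  index_le (full G) (Lambda0 G) (M * M).
Proof.
  intros HM.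
  destruct (HM alpha0) as [l0 [L0 C0]], (HM alpha1) as [l1 [L1 C1]].
  set (R := map (fun p => fst p · snd p) (list_prod l0 l1)).
  apply (Lambda0_index_le R).
  { unfold R. rewrite length_map, length_prod. apply Nat.mul_le_mono; auto. }
  intros H SH FH x.
  assert (HNH := core_normal _ SH).
  assert (Hcomm : forall a, subset (comm_sub (U a) (U a)) (core H))
    by (intro a; exact (parallel_comm_sub_in G U (core H) C HR HNH (core_periodic _ SH FH)
                          Hii a a eq_refl)).
  destruct (congr_simple_product G U (core H) HR HNH (core_quotient_abelian H SH FH) Hgen x)
    as [u0 [u1 [Hu0 [Hu1 E]]]].
  destruct (C0 u0 Hu0) as [p [Ip Kp]], (C1 u1 Hu1) as [q [Iq Kq]].
  exists (p · q). split.
  - apply (in_map (fun p => fst p · snd p) _ (p, q)), in_prod; auto.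
  - apply core_sub, (congr_trans G _ HNH _ (u0 · u1)).
    + exact (congr_mul G _ HNH _ _ _ _ (Hcomm _ _ Kp) (Hcomm _ _ Kq)).
    + apply (congr_sym G _ HNH); auto.
Qed.

End FiniteIndexQuotients.

Theorem mainTheorem2 (G : group) (U : root -> G -> Prop) (phi psi : root) (C : Z) :
  RGD U ->
  (forall a, finite_set (U a)) ->
  center_free G ->
  (forall x : G, gen (fun z => exists a, U a z) x) ->
  cond_i U phi psi ->
  cond_ii U C ->
  (cond_i' U phi psi \/ cond_i'' U phi psi) ->
  (forall x y : G, Lambda0 G (commutator x y)) /\
  (cond_i' U phi psi ->
     forall M : nat, (forall a k, has_card (U a) k -> (k <= M)%nat) ->
       index_le (full G) (Lambda0 G) M) /\
  (cond_i'' U phi psi ->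
     forall M : nat, (forall a, index_le (U a) (comm_sub (U a) (U a)) M) ->
       index_le (full G) (Lambda0 G) (M * M)).
Proof.
  intros HR Hfin _ Hgen Hi Hii Hcase.
  split; [|split].
  - intros x y H SH FH. apply core_sub, (commutator_in_of_commute_mod G (core H)).
    exact (core_quotient_abelian G U C HR Hii Hgen phi psi Hi Hcase H SH FH y x).
  - intros Hi' M HM. exact (index_bound_i' G U C HR Hii Hgen phi psi Hi Hcase M Hi' Hfin HM).
  - intros _ M HM. exact (index_bound_i'' G U C HR Hii Hgen phi psi Hi Hcase M HM).
Qed.
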